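(* If $G$ is a finite connected interval graph, then the subgraph of $G$ induced by the vertices of positive weight is a disjoint union of paths.
   Context: A finite simple graph is an interval graph iff its vertices can be assigned (closed, bounded) real intervals so that two vertices are adjacent iff their intervals intersect. A local component at a vertex $z$ is a connected component of $G\setminus\{z\}$; it is exterior iff it contains a vertex not adjacent to $z$. If $z$ has $n$ local components, the weight $\mathrm{wt}(z)$ is the sum of the $n-2$ smallest orders among the non-exterior local components at $z$ ($0$ if $n\le 2$). *)

From Stdlib Require Import Reals.
From mathcomp Require Import all_boot.
Set Implicit Arguments. Unset Strict Implicit. Unset Printing Implicit Defensive.

Section Defs.
Variable T : finType.

Definition simple_graph (e : rel T) : Prop := symmetric e /\ irreflexive e.

Definition connected_graph (e : rel T) : Prop := forall x y : T, connect e x y.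

Definition interval_graph (e : rel T) : Prop :=
  exists l r : T -> R,
    (forall x, Rle (l x) (r x)) /\
    (forall x y, x != y -> (e x y <-> (Rle (l x) (r y) /\ Rle (l y) (r x)))).

Definition del_vertex (e : rel T) (z : T) : rel T :=
  fun x y => [&& e x y, x != z & y != z].

Definition local_components (e : rel T) (z : T) : {set {set T}} :=
  [set [set y | connect (del_vertex e z) x y] | x in [set~ z]].

Definition exterior (e : rel T) (z : T) (C : {set T}) : bool :=
  [exists y in C, ~~ e z y].

Definition weight (e : rel T) (z : T) : nat :=
  let n := #|local_components e z| in
  let ords := map (fun C : {set T} => #|C|)
               (filter (fun C : {set T} => ~~ exterior e z C) (enum (local_components e z))) in
  sumn (take (n - 2) (sort leq ords)).

Definition induced (e : rel T) (S : {set T}) : rel T :=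
  fun x y => [&& e x y, x \in S & y \in S].

Definition components_on (e : rel T) (S : {set T}) : {set {set T}} :=
  [set [set y | connect (induced e S) x y] | x in S].

Definition is_path_on (e : rel T) (C : {set T}) : Prop :=
  exists s : seq T, uniq s /\ (forall x, x \in C <-> x \in s) /\
    (forall x0 i j, i < size s -> j < size s ->
       (e (nth x0 s i) (nth x0 s j) <-> (i.+1 == j) || (j.+1 == i))).

Definition disjoint_union_of_paths (e : rel T) (S : {set T}) : Prop :=
  forall C, C \in components_on e S -> is_path_on e C.

End Defs.

From Stdlib Require Import Reals Lra.
From mathcomp Require Import all_boot zify.
Set Implicit Arguments. Unset Strict Implicit. Unset Printing Implicit Defensive.

(* Only one consequence of positive weight is used: the vertex z is
   "branching", i.e. G \ z has at least three components.  If the interval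
   of z were covered by the intervals of one vertex, or of two adjacent
   vertices, a and b (both different from z), then every neighbour of z
   would be adjacent or equal to a or b; since G is connected, G \ z would
   then be connected.  Hence, among branching vertices,
   - no interval is nested in another, so left endpoints are distinct and
     left and right endpoints are ordered alike;
   - if l x < l y < l w then x and w are not adjacent (the interval of y
     would be covered by those of x and w).
   Listing a component of the induced subgraph by increasing left endpoint,
   the second fact forbids edges between non-consecutive vertices, and a
   path inside the component from one vertex to the next shows that
   consecutive vertices are adjacent. *)

Local Notation "x <=R y" := (Rle x y) (at level 70, no associativity).
Local Notation "x <R y" := (Rlt x y) (at level 70, no associativity).

Definition Rleb (x y : R) : bool := if Rle_dec x y then true else false.

Lemma RlebP (x y : R) : reflect (x <=R y) (Rleb x y).
Proof. by rewrite /Rleb; case: Rle_dec => H; constructor. Qed.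

Definition branching (T : finType) (e : rel T) (z : T) : bool :=
  2 < #|local_components e z|.

(* A vertex of positive weight is branching: with at most two local
   components the sum defining the weight is empty. *)
Lemma weight_pos_branching (T : finType) (e : rel T) z :
  0 < weight e z -> branching e z.
Proof.
rewrite /weight /branching ltnNge => pos; apply/negP => few; move: pos.
have -> : #|local_components e z| - 2 = 0 by lia.
by rewrite take0.
Qed.

Lemma connect_cross (T : finType) (E : rel T) (P : pred T) u v :
  connect E u v -> P u -> ~~ P v ->
  exists y z, [/\ connect E u y, E y z, P y & ~~ P z].
Proof.
case/connectP=> p; elim: p u => [|w p IH] u /=; first by move=> _ -> ->.
case/andP=> Euw pw lastv Pu notPv; case Pw: (P w).
- have [y [z [wy yz Py notPz]]] := IH w pw lastv Pw notPv.
  by exists y, z; split=> //; apply: connect_trans wy; apply: connect1.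
- by exists u, w; rewrite Pw.
Qed.

Section LocalComponents.
Variables (T : finType) (e : rel T).
Hypothesis e_sym : symmetric e.

Lemma del_vertex_sym z : symmetric (del_vertex e z).
Proof.
by move=> x y; rewrite /del_vertex e_sym; case: (e y x); case: (x != z); case: (y != z).
Qed.

Lemma local_components_le1 z a :
  (forall x, x != z -> connect (del_vertex e z) x a) -> #|local_components e z| <= 1.
Proof.
move=> reach_a; have Dsym := sym_connect_sym (del_vertex_sym z).
rewrite -(cards1 [set y | connect (del_vertex e z) a y]); apply: subset_leq_card.
apply/subsetP=> C /imsetP [x xz ->]; rewrite !inE in xz; rewrite inE.
apply/eqP/setP=> y; rewrite !inE; apply/idP/idP => [xy | ay].
- by apply: connect_trans xy; rewrite Dsym; apply: reach_a.
- exact: connect_trans (reach_a x xz) ay.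
Qed.

(* In a connected graph, every vertex of G \ z reaches a in G \ z as soon
   as every neighbour of z does: a path to z enters z through a neighbour. *)
Lemma neighbours_reach_all z a :
  connected_graph e ->
  (forall w, w != z -> e z w -> connect (del_vertex e z) w a) ->
  forall x, x != z -> connect (del_vertex e z) x a.
Proof.
move=> e_conn nbr_a x xz; case/connectP: (e_conn x z) => p.
elim: p x xz => [|y p IH] x xz /=; first by move=> _ zx; rewrite -zx eqxx in xz.
case/andP=> exy py lastz; case: (eqVneq y z) => [yz | yz].
- by apply: nbr_a xz _; rewrite e_sym -yz.
- apply: connect_trans (IH y yz py lastz).
  by apply: connect1; rewrite /del_vertex exy xz yz.
Qed.

End LocalComponents.

Section IntervalModel.
Variables (T : finType) (e : rel T) (l r : T -> R).
Hypothesis e_sym : symmetric e.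
Hypothesis e_conn : connected_graph e.
Hypothesis l_le_r : forall x, l x <=R r x.
Hypothesis e_meet : forall x y, x != y -> (e x y <-> (l x <=R r y /\ l y <=R r x)).

Definition in_interval x p : Prop := l x <=R p /\ p <=R r x.

Lemma meet_point x y : x != y -> e x y -> exists p, in_interval x p /\ in_interval y p.
Proof.
move=> xy /(e_meet xy) [lxry lyrx]; have := l_le_r x; have := l_le_r y.
by case: (Rle_dec (l x) (l y)) => ? ? ?; [exists (l y) | exists (l x)];
  rewrite /in_interval; lra.
Qed.

Lemma share_point_adj x y p : x != y -> in_interval x p -> in_interval y p -> e x y.
Proof. by move=> xy [? ?] [? ?]; apply/(e_meet xy); lra. Qed.

Lemma branching_uncovered z a b :
  branching e z -> a != z -> b != z -> (a = b \/ e a b) ->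
  ~ (forall p, in_interval z p -> in_interval a p \/ in_interval b p).
Proof.
move=> zbr az bz ab cover; set D := del_vertex e z.
have ba : connect D b a.
  case: ab => [-> | eab]; first exact: connect0.
  by apply: connect1; rewrite /D /del_vertex e_sym eab az bz.
have near_a w p : w != z -> in_interval w p -> in_interval z p -> connect D w a.
  move=> wz wp zp; case: (cover p zp) => [ap | bp].
  - case: (eqVneq w a) => [-> | wa]; first exact: connect0.
    by apply: connect1; rewrite /D /del_vertex (share_point_adj wa wp ap) wz az.
  - apply: connect_trans ba; case: (eqVneq w b) => [-> | wb]; first exact: connect0.
    by apply: connect1; rewrite /D /del_vertex (share_point_adj wb wp bp) wz bz.
have : #|local_components e z| <= 1.
  apply: (local_components_le1 e_sym (a := a)).
  apply: neighbours_reach_all => // w wz zw.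
  have [p [zp wp]] : exists p, in_interval z p /\ in_interval w p.
    by apply: meet_point zw; rewrite eq_sym.
  exact: near_a wp zp.
by rewrite /branching in zbr; lia.
Qed.

Lemma branching_not_nested u v :
  branching e u -> branching e v -> u != v -> l u <=R l v ->
  l u <R l v /\ r u <R r v.
Proof.
move=> ubr vbr uv luv; have vu : v != u by rewrite eq_sym.
have ruv : r u <R r v.
  case: (Rlt_le_dec (r u) (r v)) => // rvu; exfalso.
  apply: (branching_uncovered vbr uv uv (or_introl erefl)) => p [? ?].
  by left; split; lra.
split=> //; case: (Rlt_le_dec (l u) (l v)) => // lvu; exfalso.
apply: (branching_uncovered ubr vu vu (or_introl erefl)) => p [? ?].
by left; split; lra.
Qed.

Lemma branching_l_inj u v :
  branching e u -> branching e v -> l u = l v -> u = v.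
Proof.
move=> ubr vbr luv; apply/eqP/negPn/negP => uv.
by have [? _] := branching_not_nested ubr vbr uv (Req_le _ _ luv); lra.
Qed.

Lemma branching_no_long_edge x y w :
  branching e x -> branching e y -> branching e w ->
  l x <R l y -> l y <R l w -> ~~ e x w.
Proof.
move=> xbr ybr wbr lxy lyw; apply/negP => exw.
have xy : x != y by apply/eqP => xy; rewrite xy in lxy; lra.
have yw : y != w by apply/eqP => yw; rewrite yw in lyw; lra.
have xw : x != w by apply/eqP => xw; rewrite xw in lxy; lra.
have [_ rxy] := branching_not_nested xbr ybr xy (Rlt_le _ _ lxy).
have [_ ryw] := branching_not_nested ybr wbr yw (Rlt_le _ _ lyw).
have [_ lwrx] := proj1 (e_meet xw) exw.
apply: (branching_uncovered ybr xy (a := x) (b := w)).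
- by rewrite eq_sym.
- by right.
- by move=> p [? ?]; case: (Rle_dec p (r x)) => ?; [left | right]; split; lra.
Qed.

Section SortedComponent.
Variables (E : rel T) (c : T).
Hypothesis E_sub : subrel E e.
Hypothesis E_csym : connect_sym E.
Let C := [set y | connect E c y].
Hypothesis C_branching : {in C, forall x, branching e x}.

(* Two vertices of C with no left endpoint of C strictly between theirs are
   adjacent: a path from u to v in C leaves the vertices with left endpoint
   at most l u along an edge, which by branching_no_long_edge must be uv. *)
Lemma consecutive_adjacent u v :
  u \in C -> v \in C -> l u <R l v ->
  (forall w, w \in C -> l u <R l w -> l v <=R l w) -> e u v.
Proof.
move=> uC vC luv gap.
have C_closed y w : y \in C -> connect E y w -> w \in C.
  by rewrite !inE => cy yw; apply: connect_trans yw.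
have uv : connect E u v.
  by move: uC vC; rewrite !inE E_csym => uc cv; apply: connect_trans cv.
have [y [z [uy Eyz /RlebP lyu /RlebP lzu]]] :
    exists y z, [/\ connect E u y, E y z, Rleb (l y) (l u) & ~~ Rleb (l z) (l u)].
  by apply: connect_cross uv _ _; apply/RlebP; lra.
have yC : y \in C := C_closed u y uC uy.
have zC : z \in C := C_closed y z yC (connect1 Eyz).
have eyz := E_sub Eyz; have luz := Rnot_le_lt _ _ lzu.
have yu : y = u.
  case: (Rle_lt_or_eq_dec _ _ lyu) => [lyu' | ]; last first.
    exact: branching_l_inj (C_branching yC) (C_branching uC).
  have := branching_no_long_edge (C_branching yC) (C_branching uC) (C_branching zC) lyu' luz.
  by rewrite eyz.
have zv : z = v.
  case: (Rle_lt_or_eq_dec _ _ (gap z zC luz)) => [lvz | ]; last first.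
    by move=> lvz; apply/esym/(branching_l_inj (C_branching vC) (C_branching zC)).
  have := branching_no_long_edge (C_branching uC) (C_branching vC) (C_branching zC) luv lvz.
  by rewrite -yu eyz.
by rewrite -yu -zv.
Qed.

Lemma sorted_component_adjacency (s : seq T) x0 :
  s =i C ->
  (forall i j, i < j -> j < size s -> l (nth x0 s i) <R l (nth x0 s j)) ->
  forall i j, i < j -> j < size s -> e (nth x0 s i) (nth x0 s j) <-> i.+1 == j.
Proof.
move=> sC lmono i j ij js; have is_ : i < size s by lia.
have s_br k : k < size s -> branching e (nth x0 s k).
  by move=> ks; apply: C_branching; rewrite -sC mem_nth.
split => [eij | /eqP ij1].
- rewrite eqn_leq ij /= leqNgt; apply/negP => i1j; have i1s : i.+1 < size s by lia.
  have := branching_no_long_edge (s_br i is_) (s_br _ i1s) (s_br j js)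
    (lmono _ _ (ltnSn i) i1s) (lmono _ _ i1j js).
  by rewrite eij.
- subst j; apply: consecutive_adjacent; rewrite -?sC ?mem_nth //; first exact: lmono.
  move=> w wC luw; have ws : w \in s by rewrite sC.
  have [k ks kw] : exists2 k, k < size s & nth x0 s k = w.
    by exists (index w s); rewrite ?index_mem ?nth_index.
  rewrite -kw in luw *; case: (ltngtP k i.+1) => [ki | ik | ->].
  + have lki : l (nth x0 s k) <=R l (nth x0 s i).
      case: (ltngtP k i) => [ki' | ik' | ->]; last exact: Rle_refl.
      * exact: Rlt_le (lmono _ _ ki' is_).
      * by exfalso; lia.
    by exfalso; lra.
  + exact: Rlt_le (lmono _ _ ik ks).
  + exact: Rle_refl.
Qed.

Hypothesis e_irr : irreflexive e.

Lemma component_is_path : is_path_on e C.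
Proof.
pose leb u v := Rleb (l u) (l v).
have leb_tot : total leb.
  by move=> u v; rewrite /leb; case: (RlebP (l u) (l v)) => //= ?; apply/RlebP; lra.
have leb_tr : transitive leb by move=> v u w /RlebP ? /RlebP ?; apply/RlebP; lra.
have leb_refl : reflexive leb by move=> u; apply/RlebP; lra.
pose s := sort leb (enum C).
have sC : s =i C by move=> y; rewrite mem_sort mem_enum.
have s_uniq : uniq s by rewrite sort_uniq enum_uniq.
exists s; split=> //; split; first by move=> y; rewrite sC.
move=> x0.
have s_C k : k < size s -> nth x0 s k \in C by move=> ks; rewrite -sC mem_nth.
have lmono i j : i < j -> j < size s -> l (nth x0 s i) <R l (nth x0 s j).
  move=> ij js; have is_ : i < size s by lia.
  have /RlebP lij : leb (nth x0 s i) (nth x0 s j).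
    by apply: (sorted_leq_nth leb_tr leb_refl x0 (sort_sorted leb_tot _)); rewrite ?inE // ltnW.
  case: (Rle_lt_or_eq_dec _ _ lij) => // lij'; exfalso.
  have := branching_l_inj (C_branching (s_C i is_)) (C_branching (s_C j js)) lij'.
  by move/eqP; rewrite nth_uniq //; lia.
have adjacency := sorted_component_adjacency sC lmono.
move=> i j is_ js; case: (ltngtP i j) => [ij | ji | <-].
- by rewrite (adjacency i j ij js) (gtn_eqF (leqW ij)) orbF.
- by rewrite e_sym (adjacency j i ji is_) (gtn_eqF (leqW ji)).
- by rewrite e_irr (gtn_eqF (ltnSn i)).
Qed.

End SortedComponent.

End IntervalModel.

Theorem theorem2p4 (T : finType) (e : rel T) :
  simple_graph e -> connected_graph e -> interval_graph e ->
  disjoint_union_of_paths e [set z | 0 < weight e z].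
Proof.
move=> [e_sym e_irr] e_conn [l [r [l_le_r e_meet]]] C.
set S := [set z | 0 < weight e z]; set E := induced e S.
have E_sub : subrel E e by move=> x y /and3P [].
have E_csym : connect_sym E.
  apply: sym_connect_sym => x y; rewrite /E /induced e_sym.
  by case: (x \in S); case: (y \in S); rewrite ?andbF ?andbT.
have S_closed : closed E S by move=> x y /and3P [_ -> ->].
case/imsetP=> c cS ->.
apply: (component_is_path e_sym e_conn l_le_r e_meet E_sub E_csym _ e_irr) => y.
rewrite inE => cy; apply: weight_pos_branching.
have : y \in S by rewrite -(closed_connect S_closed cy).
by rewrite inE.
Qed.
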